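(* Let $\Lambda:\mathbb{R}\to[0,1]$ be decreasing. The map $\mathrm{ES}_\Lambda:L^1\to\overline{\mathbb{R}}$ satisfies $$-\infty<\mathbb E[X]\le\mathrm{ES}_\Lambda(X)\le\mathrm{ES}_1(X),\quad X\in L^1.$$ In particular, for $X\in L^1$, $\mathrm{ES}_\Lambda(X)$ is finite if and only if $\mathrm{VaR}_1(X)<\infty$ or $\Lambda$ is not constantly $1$.
   Context: $(\Omega,\mathcal F,\mathbb P)$ is an atomless probability space, $L^0$ all random variables, $L^1$ integrable ones; $\overline{\mathbb{R}}=[-\infty,\infty]$; ''decreasing'' is weak; $\wedge=\min$. For $\alpha\in[0,1]$, $X\in L^0$: $\mathrm{VaR}_\alpha(X)=\inf\{x\in\mathbb{R}:\mathbb P(X\le x)\ge\alpha\}$ (so $\mathrm{VaR}_1(X)$ is the essential supremum, possibly $\infty$). For $X\in L^1$: $\mathrm{ES}_\alpha(X)=\frac{1}{1-\alpha}\int_\alpha^1\mathrm{VaR}_\beta(X)\,\mathrm d\beta$ for $\alpha\in[0,1)$ and $\mathrm{ES}_1(X)=\mathrm{VaR}_1(X)$; for decreasing $\Lambda$, $\mathrm{ES}_\Lambda(X)=\sup_{x\in\mathbb{R}}\left(\mathrm{ES}_{\Lambda(x)}(X)\wedge x\right)$, $X\in L^1$. *)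

From HB Require Import structures.
From mathcomp Require Import all_boot all_order all_algebra.
From mathcomp Require Import all_classical all_reals all_analysis.
Set Implicit Arguments. Unset Strict Implicit. Unset Printing Implicit Defensive.
Import Order.TTheory GRing.Theory Num.Theory.
Import numFieldNormedType.Exports.
Local Open Scope classical_set_scope.
Local Open Scope ring_scope.

Definition atomless (R : realType) (d : measure_display) (T : measurableType d)
  (P : probability T R) : Prop :=
  forall A : set T, measurable A -> (0 < P A)%E ->
    exists B : set T, [/\ measurable B, B `<=` A, (0 < P B)%E & (P B < P A)%E].

(* VaR_alpha(X) = inf { x in R : P(X <= x) >= alpha }, in the extended reals
   (inf of the empty set is +oo, inf of an unbounded-below set is -oo) *)
Definition VaR (R : realType) (d : measure_display) (T : measurableType d)
  (P : probability T R) (alpha : R) (X : T -> R) : \bar R :=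
  ereal_inf [set x%:E | x in [set x : R | (alpha%:E <= P [set w | (X w <= x)%R])%E]].

Definition ES (R : realType) (d : measure_display) (T : measurableType d)
  (P : probability T R) (alpha : R) (X : T -> R) : \bar R :=
  if alpha < 1 then
    (((1 - alpha)^-1)%:E *
      \int[lebesgue_measure]_(b in `[alpha, 1%R]) VaR P b X)%E
  else VaR P 1 X.

Definition ESL (R : realType) (d : measure_display) (T : measurableType d)
  (P : probability T R) (Lam : R -> R) (X : T -> R) : \bar R :=
  ereal_sup [set (Order.min (ES P (Lam x) X) x%:E)%E | x in [set: R]].

(* Write q b = VaR_b(X) and U_a for the uniform law on [a, 1], so that for
   0 <= a < 1 we have ES_a(X) = E_{U_a}[q^+] - E_{U_a}[q^-].  By the layer-cake
   formula both sides of each comparison below are integrals of tail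
   probabilities, and {q > t} contains ]F t, 1[ where F is the cdf of X.  As
   U_a(]m, 1[) >= 1 - m and U_a(]-oo, m]) <= m when a >= 0, this yields
   E[X^+] <= E_{U_a}[q^+] <= E[X^+] / (1 - a) and E_{U_a}[q^-] <= E[X^-], hence
   E[X] <= ES_a(X) <= E[X^+] / (1 - a); moreover ES_a(X) <= VaR_1(X) since q is
   nondecreasing.  Taking x = E[X] in the supremum defining ES_Lambda gives the
   lower bound.  If Lambda x0 < 1, every term of that supremum is bounded by
   max(x0, E[X^+] / (1 - Lambda x0)); if Lambda = 1 the supremum is
   sup_x min(VaR_1(X), x) = VaR_1(X). *)

From HB Require Import structures.
From mathcomp Require Import all_boot all_order all_algebra.
From mathcomp Require Import all_classical all_reals all_analysis.
From mathcomp Require Import measurable_realfun lra.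
Set Implicit Arguments. Unset Strict Implicit. Unset Printing Implicit Defensive.
Import Order.TTheory GRing.Theory Num.Theory.
Import numFieldNormedType.Exports.
Local Open Scope classical_set_scope.
Local Open Scope ring_scope.

Lemma nondecreasing_emeasurable (R : realType) (f : R -> \bar R) :
  {homo f : x y / x <= y >-> (x <= y)%E} -> measurable_fun setT f.
Proof.
move=> fnd; apply: (measurability _ (ErealGenCInfty.measurableE R)) => //.
move=> _ [_ [r ->] <-]; apply: measurableI => //.
apply: is_interval_measurable => s t /= + _ u /andP[su _].
by rewrite !in_itv /= !andbT => /le_trans; apply; exact: fnd.
Qed.

Lemma nonincreasing_emeasurable (R : realType) (f : R -> \bar R) :
  {homo f : x y / x <= y >-> (y <= x)%E} -> measurable_fun setT f.
Proof.
move=> fni; apply: (measurability _ (ErealGenCInfty.measurableE R)) => //.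
move=> _ [_ [r ->] <-]; apply: measurableI => //.
apply: is_interval_measurable => s t /= _ + u /andP[_ ut].
by rewrite !in_itv /= !andbT => /le_trans; apply; exact: fni.
Qed.

Section level_sets.
Context d (T : measurableType d) (R : realType) (g : T -> R).
Hypothesis mg : measurable_fun setT g.

Lemma measurable_superlevel_lt t : measurable [set w | t < g w].
Proof.
have := mg measurableT (measurable_itv `]t, +oo[); rewrite setTI.
by congr measurable; apply/seteqP; split => w /=; rewrite in_itv /= andbT.
Qed.

Lemma measurable_superlevel_le t : measurable [set w | t <= g w].
Proof.
have := mg measurableT (measurable_itv `[t, +oo[); rewrite setTI.
by congr measurable; apply/seteqP; split => w /=; rewrite in_itv /= andbT.
Qed.

Lemma measurable_sublevel_le t : measurable [set w | g w <= t].
Proof.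
have := mg measurableT (measurable_itv `]-oo, t]); rewrite setTI.
by congr measurable; apply/seteqP; split => w /=; rewrite in_itv.
Qed.

Context (mu : {measure set T -> \bar R}).

Lemma measurable_measure_superlevel_lt :
  measurable_fun setT (fun t : R => mu [set w | t < g w]).
Proof.
apply: nonincreasing_emeasurable => s t st.
apply: le_measure; rewrite ?inE; try exact: measurable_superlevel_lt.
by move=> w /=; exact: le_lt_trans.
Qed.

Lemma measurable_measure_sublevel_le :
  measurable_fun setT (fun t : R => mu [set w | g w <= t]).
Proof.
apply: nondecreasing_emeasurable => s t st.
apply: le_measure; rewrite ?inE; try exact: measurable_sublevel_le.
by move=> w /= /le_trans; exact.
Qed.

End level_sets.

Section layer_cake.
Context (R : realType) d (T : measurableType d) (Q : probability T R).
Context (Y : T -> R).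
Hypotheses (mY : measurable_fun setT Y) (Y_ge0 : forall w, 0 <= Y w).

Lemma ge0_integral_ccdf : (\int[Q]_w (Y w)%:E =
  \int[lebesgue_measure]_(t in `[0%R, +oo[) Q [set w | (t < Y w)%R])%E.
Proof.
pose YR : {RV Q >-> R} := mfun_Sub (mem_set mY).
have := @ge0_expectation_ccdf _ _ _ Q YR Y_ge0; rewrite expectation_def => ->.
apply: eq_integral => t _; congr (Q _).
by apply/seteqP; split => w /=; rewrite in_itv /= andbT.
Qed.

Lemma ge0_integral_cdfN : (\int[Q]_w (Y w)%:E =
  \int[lebesgue_measure]_(r in `]-oo, 0%R[) Q [set w | (- r <= Y w)%R])%E.
Proof.
pose NY : {RV Q >-> R} := mfun_Sub (mem_set (measurable_funN mY)).
have NY_le0 w : NY w <= 0 by rewrite /= oppr_le0.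
have := @le0_expectation_cdf _ _ _ Q NY NY_le0; rewrite expectation_def /=.
under eq_integral do rewrite EFinN.
rewrite integral_ge0N => [/oppe_inj ->|w _]; last by rewrite lee_fin.
apply: eq_integral => r _; congr (Q _).
by apply/seteqP; split => w /=; rewrite in_itv /= lerNl.
Qed.

End layer_cake.

Section uniform_prob_bounds.
Context (R : realType) (a : R).
Hypotheses (a_ge0 : 0 <= a) (a_lt1 : a < 1).
Local Notation U := (uniform_prob a_lt1).
Local Notation mu := (@lebesgue_measure R).

Let inv1Ba_gt0 : 0 < (1 - a)^-1.
Proof. by rewrite invr_gt0 subr_gt0. Qed.

Let mul_inv1Ba : (1 - a)^-1 * (1 - a) = 1.
Proof. by rewrite mulVf // subr_eq0 gt_eqF. Qed.

Lemma uniform_probE (A : set R) : measurable A ->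
  U A = (((1 - a)^-1)%:E * mu (A `&` `[a, 1%R]))%E.
Proof.
move=> mA; rewrite /uniform_prob integral_uniform_pdf.
rewrite -integral_cst; last exact: measurableI.
apply: eq_integral => x; rewrite inE /= in_itv /= => -[_ ax1].
by rewrite /uniform_pdf ax1.
Qed.

Lemma integral_uniform_itvoo (f : R -> \bar R) :
  measurable_fun setT f -> (forall x, 0 <= f x)%E ->
  (\int[U]_x f x = ((1 - a)^-1)%:E * \int[mu]_(x in `]a, 1%R[) f x)%E.
Proof.
move=> mf f_ge0; rewrite integral_uniform //.
by rewrite (@integral_itv_bndoo _ a 1 f true false) //; exact: measurable_funTS.
Qed.

Let integral_itvoo_cst k :
  (((1 - a)^-1)%:E * \int[mu]_(x in `]a, 1%R[) k%:E)%E = k%:E.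
Proof.
rewrite integral_cst //= lebesgue_measure_itv /= lte_fin a_lt1 -EFinD.
by rewrite -!EFinM mulrCA mul_inv1Ba mulr1.
Qed.

Lemma integral_uniform_le_cst (f : R -> \bar R) k :
  measurable_fun setT f -> (forall x, 0 <= f x)%E ->
  (forall x, a < x < 1 -> (f x <= k%:E)%E) -> (\int[U]_x f x <= k%:E)%E.
Proof.
move=> mf f_ge0 f_le_k; rewrite integral_uniform_itvoo // -(integral_itvoo_cst k).
apply: lee_wpmul2l; first by rewrite lee_fin ltW.
by apply: ge0_le_integral => //; exact: measurable_funTS.
Qed.

Lemma integral_uniform_ge_cst (f : R -> \bar R) k : 0 <= k ->
  measurable_fun setT f -> (forall x, 0 <= f x)%E ->
  (forall x, a < x < 1 -> (k%:E <= f x)%E) -> (k%:E <= \int[U]_x f x)%E.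
Proof.
move=> k_ge0 mf f_ge0 k_le_f; rewrite integral_uniform_itvoo // -(integral_itvoo_cst k).
apply: lee_wpmul2l; first by rewrite lee_fin ltW.
by apply: ge0_le_integral => //; exact: measurable_funTS.
Qed.

Lemma uniform_prob_itvoo_ge m : 0 <= m <= 1 -> ((1 - m)%:E <= U `]m, 1%R[)%E.
Proof.
move=> /andP[m_ge0 m_le1].
have [->|m_lt1] := eqVneq m 1; first by rewrite subrr measure_ge0.
have {m_lt1} m_lt1 : m < 1 by rewrite lt_neqAle m_lt1.
pose M := Num.max m a.
have M_lt1 : M < 1 by rewrite gt_max m_lt1.
apply: (@le_trans _ _ (U `]M, 1%R[)); last first.
  apply: le_measure; rewrite ?inE // => x /=; rewrite !in_itv /=.
  by case/andP => Mx ->; rewrite andbT (le_lt_trans _ Mx)// le_max lexx.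
rewrite uniform_probE // setIidl; last first.
  move=> x /=; rewrite !in_itv /= => /andP[Mx x1]; rewrite (ltW x1) andbT.
  by rewrite ltW // (le_lt_trans _ Mx) // le_max lexx orbT.
rewrite lebesgue_measure_itv /= lte_fin M_lt1 -EFinD -EFinM lee_fin.
have [am|ma] := leP a m.
  have -> : M = m by apply/max_idPl.
  have : 0 <= ((1 - a)^-1 - 1) * (1 - m).
    by rewrite mulr_ge0 ?subr_ge0 // invf_ge1 ?subr_gt0 // lerBlDr lerDl.
  nra.
have -> : M = a by apply/max_idPr; exact: ltW.
by rewrite mul_inv1Ba; lra.
Qed.

Lemma uniform_prob_itvoy_le m : m <= 1 ->
  (U `]m, +oo[ <= ((1 - a)^-1 * (1 - m))%:E)%E.
Proof.
move=> m_le1; rewrite uniform_probE //.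
apply: (@le_trans _ _ (((1 - a)^-1)%:E * mu `]m, 1%R])%E).
  apply: lee_wpmul2l; first by rewrite lee_fin ltW.
  apply: le_measure; rewrite ?inE //; first exact: measurableI.
  by move=> x [] /=; rewrite !in_itv /= andbT => -> /andP[_ ->].
rewrite lebesgue_measure_itv /= lte_fin.
case: ifP => _; first by rewrite -EFinD -EFinM.
by rewrite mule0 lee_fin mulr_ge0 ?subr_ge0 // ltW.
Qed.

Lemma uniform_prob_itvNyc_le m : 0 <= m <= 1 -> (U `]-oo, m] <= m%:E)%E.
Proof.
move=> /andP[m_ge0 m_le1]; rewrite uniform_probE //.
apply: (@le_trans _ _ (((1 - a)^-1)%:E * mu `[a, m])%E).
  apply: lee_wpmul2l; first by rewrite lee_fin ltW.
  apply: le_measure; rewrite ?inE //; first exact: measurableI.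
  by move=> x [] /=; rewrite !in_itv /= => -> /andP[-> _].
rewrite lebesgue_measure_itv /= lte_fin.
case: ifP => _; last by rewrite mule0 lee_fin.
rewrite -EFinD -EFinM lee_fin.
have : 0 <= (1 - a)^-1 * a * (1 - m) by rewrite !mulr_ge0 ?subr_ge0 // ltW.
have := mul_inv1Ba; nra.
Qed.

End uniform_prob_bounds.

Section value_at_risk.
Context (R : realType) d (T : measurableType d) (P : probability T R).
Context (X : T -> R).
Hypothesis mX : measurable_fun setT X.

Let XR : {RV P >-> R} := mfun_Sub (mem_set mX).

Let F s := P [set w | X w <= s].

Let FE s : F s = cdf XR s. Proof. by []. Qed.

Lemma VaR_le_cdf b s :
  (VaR P b X <= s%:E)%E <-> (b%:E <= P [set w | (X w <= s)%R])%E.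
Proof.
rewrite -/(F s); split=> [VaR_le_s|bFs]; last by apply: ereal_inf_lbound; exists s.
have b_le_F r : s < r -> (b%:E <= F r)%E.
  move=> sr; have /ereal_inf_lt[_ [x /= bFx <-]] : (VaR P b X < r%:E)%E.
    by apply: le_lt_trans VaR_le_s _; rewrite lte_fin.
  by rewrite lte_fin FE => /ltW/(@cdf_nondecreasing _ _ _ P XR); exact: le_trans.
rewrite FE; apply: (cvge_ge _ (@cdf_right_continuous _ _ _ P XR s)); near=> r.
by rewrite -FE; apply: b_le_F; near: r; exact: nbhs_right_gt.
Unshelve. all: by end_near.
Qed.

Lemma VaR_nondecreasing :
  {homo (fun b => VaR P b X) : b c / b <= c >-> (b <= c)%E}.
Proof.
move=> b c bc; apply: ereal_inf_le_tmp => _ [x /= cFx <-].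
by exists x => //=; exact: le_trans cFx.
Qed.

Lemma measurable_VaR : measurable_fun setT (fun b => VaR P b X).
Proof. exact: nondecreasing_emeasurable VaR_nondecreasing. Qed.

Lemma VaR_lty b : b < 1 -> (VaR P b X < +oo)%E.
Proof.
move=> b_lt1; have [x bFx] : exists x, (b%:E <= F x)%E.
  apply: contrapT => /forallNP F_lt_b.
  have : (1 <= b%:E)%E.
    apply: (cvge_le _ (@cvg_cdfy1 _ _ _ P XR)); near=> x.
    by rewrite -FE ltW // ltNge; exact/negP/F_lt_b.
  by rewrite lee_fin leNgt b_lt1.
by apply: le_lt_trans (proj2 (VaR_le_cdf b x) bFx) _; rewrite ltry.
Unshelve. all: by end_near.
Qed.

Lemma VaR_gtNy b : 0 < b -> (-oo < VaR P b X)%E.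
Proof.
move=> b_gt0; have [x Fxb] : exists x, (F x < b%:E)%E.
  apply: contrapT => /forallNP F_ge_b.
  have : (b%:E <= 0)%E.
    apply: (cvge_ge _ (@cvg_cdfNy0 _ _ _ P XR)); near=> x.
    by rewrite -FE leNgt; exact/negP/F_ge_b.
  by rewrite lee_fin leNgt b_gt0.
rewrite ltNge; apply/negP => /(le_trans)/(_ (leNye x%:E))/VaR_le_cdf.
by rewrite leNgt Fxb.
Unshelve. all: by end_near.
Qed.

Lemma VaR_fin_num b : 0 < b < 1 -> VaR P b X \is a fin_num.
Proof.
by case/andP => b_gt0 b_lt1; rewrite fin_numE -ltey -ltNye VaR_lty // VaR_gtNy.
Qed.

End value_at_risk.

Lemma ereal_sup_min_EFin (R : realType) (v : \bar R) :
  ereal_sup [set Order.min v x%:E | x in [set: R]] = v.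
Proof.
apply/le_anti/andP; split.
  by apply: ge_ereal_sup => _ [x _ <-]; rewrite ge_min lexx.
case: v => [r| |]; last exact: leNye.
  by apply: ereal_sup_ubound; exists r => //; rewrite minxx.
rewrite leye_eq; apply/eqP/eqyP => A _.
by apply: ereal_sup_ubound; exists A => //; rewrite min_r ?leey.
Qed.

Section expected_shortfall_Lambda.
Context (R : realType) d (T : measurableType d) (P : probability T R).
Context (Lam : R -> R) (X : T -> R).

Lemma ES1E : ES P 1 X = VaR P 1 X.
Proof. by rewrite /ES ltxx. Qed.

Lemma ESL_cst1 : (forall x, Lam x = 1) -> ESL P Lam X = VaR P 1 X.
Proof.
move=> Lam1; rewrite /ESL -[RHS](ereal_sup_min_EFin (VaR P 1 X)).
by congr ereal_sup; apply: eq_imagel => x _; rewrite Lam1 ES1E.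
Qed.

Lemma le_ESL y : (y%:E <= ES P (Lam y) X)%E -> (y%:E <= ESL P Lam X)%E.
Proof.
move=> y_le_ES; apply: (@le_trans _ _ (Order.min (ES P (Lam y) X) y%:E)).
  by rewrite le_min y_le_ES lexx.
by apply: ereal_sup_ubound; exists y.
Qed.

Lemma ESL_le v : (forall x, ES P (Lam x) X <= v)%E -> (ESL P Lam X <= v)%E.
Proof. by move=> ES_le_v; apply: ge_ereal_sup => _ [x _ <-]; rewrite ge_min ES_le_v. Qed.

Lemma ESL_le_max (x0 M : R) : (forall x, x0 < x -> (ES P (Lam x) X <= M%:E)%E) ->
  (ESL P Lam X <= (Num.max x0 M)%:E)%E.
Proof.
move=> ES_le_M; apply: ge_ereal_sup => _ [x _ <-].
have [xx0|x0x] := leP x x0; rewrite ge_min.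
  by rewrite lee_fin le_max xx0 orbT.
by rewrite (le_trans (ES_le_M _ x0x)) // lee_fin le_max lexx orbT.
Qed.

End expected_shortfall_Lambda.

Section expected_shortfall_bounds.
Context (R : realType) d (T : measurableType d) (P : probability T R).
Context (X : T -> R).
Hypothesis iX : P.-integrable setT (EFin \o X).
Local Notation mu := (@lebesgue_measure R).

Let mX : measurable_fun setT X.
Proof. exact/measurable_EFinP/(measurable_int _ iX). Qed.

Let Fr s := fine (P [set w | X w <= s]).

Let FrE s : (Fr s)%:E = P [set w | X w <= s].
Proof. by rewrite fineK // fin_num_measure //; exact: measurable_sublevel_le. Qed.

Let Fr_ge0 s : 0 <= Fr s. Proof. by rewrite -lee_fin FrE. Qed.

Let Fr_le1 s : Fr s <= 1.
Proof. by rewrite -lee_fin FrE probability_le1 //; exact: measurable_sublevel_le. Qed.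

Let Fr01 s : 0 <= Fr s <= 1. Proof. by rewrite Fr_ge0 Fr_le1. Qed.

Let P_superlevel_lt t : P [set w | t < X w] = (1 - Fr t)%:E.
Proof.
rewrite (_ : [set w | t < X w] = ~` [set w | X w <= t]); last first.
  by apply/seteqP; split => w /=; rewrite ltNge => /negP.
by rewrite probability_setC ?EFinB ?FrE //; exact: measurable_sublevel_le.
Qed.

Let expectation_funrpos_ccdf : (\int[P]_w (X^\+ w)%:E =
  \int[mu]_(t in `[0%R, +oo[) P [set w | (t < X w)%R])%E.
Proof.
rewrite ge0_integral_ccdf; [|exact: measurable_funrpos|exact: funrpos_ge0].
apply: eq_integral => t; rewrite inE /= in_itv /= andbT => t_ge0.
congr (P _); apply/seteqP; split => w /=; rewrite /funrpos lt_max.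
  by case/orP => //; rewrite ltNge t_ge0.
by move=> ->.
Qed.

Let expectation_funrneg_cdf : (\int[P]_w (X^\- w)%:E =
  \int[mu]_(r in `]-oo, 0%R[) P [set w | (X w <= r)%R])%E.
Proof.
rewrite ge0_integral_cdfN; [|exact: measurable_funrneg|exact: funrneg_ge0].
apply: eq_integral => r; rewrite inE /= in_itv /= => r_lt0.
congr (P _); apply/seteqP; split => w /=; rewrite /funrneg le_max lerN2.
  by case/orP => //; rewrite oppr_le0 leNgt r_lt0.
by move=> ->.
Qed.

Let mP_superlevel D : measurable_fun D (fun t : R => P [set w | t < X w]).
Proof. by apply: measurable_funTS; exact: measurable_measure_superlevel_lt. Qed.

Let q b := fine (VaR P b X).

Let mq : measurable_fun setT q.
Proof. by apply: measurableT_comp; [exact: fine_measurable|exact: measurable_VaR]. Qed.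

(* [fine] sends the infinite values of [VaR] to [0]. *)
Let VaR_fine b : q b != 0 -> VaR P b X = (q b)%:E.
Proof. by rewrite /q; case: (VaR P b X) => //=; rewrite eqxx. Qed.

Let lt_q t b : Fr t < b < 1 -> t < q b.
Proof.
case/andP => tb b_lt1; have b_gt0 : 0 < b := le_lt_trans (Fr_ge0 t) tb.
have VaR_fin : VaR P b X \is a fin_num by apply: VaR_fin_num; rewrite ?b_gt0.
rewrite ltNge; apply/negP => qbt.
have : (VaR P b X <= t%:E)%E by rewrite -(fineK VaR_fin) lee_fin.
by rewrite VaR_le_cdf // -FrE lee_fin leNgt tb.
Qed.

Let cdf_lt t b : 0 <= t < q b -> Fr t < b.
Proof.
case/andP => t_ge0 tqb; have qb_neq0 : q b != 0 by rewrite gt_eqF ?(le_lt_trans t_ge0).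
rewrite ltNge; apply/negP => bFt.
have : (VaR P b X <= t%:E)%E by rewrite VaR_le_cdf // -FrE lee_fin.
by rewrite VaR_fine // lee_fin leNgt tqb.
Qed.

Let le_cdf r b : q b <= r < 0 -> b <= Fr r.
Proof.
case/andP => qbr r_lt0; have qb_neq0 : q b != 0 by rewrite lt_eqF ?(le_lt_trans qbr).
by rewrite -lee_fin FrE -VaR_le_cdf // VaR_fine // lee_fin.
Qed.

Section uniform_average.
Context (a : R) (a_ge0 : 0 <= a) (a_lt1 : a < 1).
Local Notation U := (uniform_prob a_lt1).

Let mqp : measurable_fun setT q^\+. Proof. exact: measurable_funrpos. Qed.
Let mqn : measurable_fun setT q^\-. Proof. exact: measurable_funrneg. Qed.

Let expectation_funrpos_le_uniform :
  (\int[P]_w (X^\+ w)%:E <= \int[U]_b (q^\+ b)%:E)%E.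
Proof.
rewrite expectation_funrpos_ccdf (ge0_integral_ccdf U mqp (funrpos_ge0 q)).
apply: ge0_le_integral => //;
  try by apply: measurable_funTS; exact: measurable_measure_superlevel_lt.
move=> t; rewrite /= in_itv /= andbT => t_ge0.
rewrite P_superlevel_lt.
apply: le_trans (uniform_prob_itvoo_ge a_ge0 a_lt1 (Fr01 t)) _.
apply: le_measure; rewrite ?inE //; first exact: measurable_superlevel_lt.
move=> b /=; rewrite in_itv /= => Ftb1.
by rewrite /funrpos lt_max lt_q.
Qed.

Let uniform_funrpos_le_expectation : (\int[U]_b (q^\+ b)%:E <=
  ((1 - a)^-1)%:E * \int[P]_w (X^\+ w)%:E)%E.
Proof.
have c_ge0 : 0 <= (1 - a)^-1 by rewrite invr_ge0 subr_ge0 ltW.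
rewrite expectation_funrpos_ccdf (ge0_integral_ccdf U mqp (funrpos_ge0 q)).
rewrite -ge0_integralZl //; last exact: mP_superlevel.
apply: ge0_le_integral => //.
- by apply: measurable_funTS; exact: measurable_measure_superlevel_lt.
- by apply: measurable_funeM; exact: mP_superlevel.
move=> t; rewrite /= in_itv /= andbT => t_ge0.
rewrite P_superlevel_lt -EFinM.
apply: le_trans (uniform_prob_itvoy_le a_lt1 (Fr_le1 t)).
apply: le_measure; rewrite ?inE //; first exact: measurable_superlevel_lt.
move=> b /=; rewrite in_itv /= andbT /funrpos lt_max (ltNge t 0) t_ge0 orbF => tqb.
by apply: cdf_lt; rewrite t_ge0.
Qed.

Let uniform_funrneg_le_expectation :
  (\int[U]_b (q^\- b)%:E <= \int[P]_w (X^\- w)%:E)%E.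
Proof.
have mU : measurable_fun setT (fun r : R => U [set b | (- r <= q^\- b)%R]).
  apply: nondecreasing_emeasurable => s t st.
  apply: le_measure; rewrite ?inE; try exact: measurable_superlevel_le.
  by move=> b /=; apply: le_trans; rewrite lerN2.
rewrite expectation_funrneg_cdf (ge0_integral_cdfN U mqn (funrneg_ge0 q)).
apply: ge0_le_integral => //.
- by apply: measurable_funTS; exact: mU.
- by apply: measurable_funTS; exact: measurable_measure_sublevel_le.
move=> r; rewrite /= in_itv /= => r_lt0.
rewrite -FrE; apply: le_trans (uniform_prob_itvNyc_le a_ge0 a_lt1 (Fr01 r)).
apply: le_measure; rewrite ?inE //; first exact: measurable_superlevel_le.
move=> b /=; rewrite in_itv /= /funrneg le_max (leNgt (- r) 0) oppr_gt0 r_lt0.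
by rewrite orbF lerN2 => qbr; apply: le_cdf; rewrite qbr.
Qed.

Let ES_funrposBneg : ES P a X =
  (\int[U]_b (q^\+ b)%:E - \int[U]_b (q^\- b)%:E)%E.
Proof.
have c_gt0 : 0 < (1 - a)^-1 by rewrite invr_gt0 subr_gt0.
have integral_U (f : R -> R) : measurable_fun setT f -> (forall b, 0 <= f b) ->
    (\int[U]_b (f b)%:E =
     ((1 - a)^-1)%:E * \int[mu]_(b in `]a, 1%R[) (f b)%:E)%E.
  by move=> mf f_ge0; rewrite integral_uniform_itvoo //; exact/measurable_EFinP.
have qn_fin : (\int[mu]_(b in `]a, 1%R[) (q^\- b)%:E)%E \is a fin_num.
  rewrite ge0_fin_numE; last by apply: integral_ge0 => b _; rewrite lee_fin.
  rewrite ltey; apply/eqP => qn_oo.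
  have := uniform_funrneg_le_expectation.
  rewrite integral_U // qn_oo gt0_muley ?lte_fin // leye_eq => /eqP EXn_oo.
  have := integrable_fin_num measurableT (integrable_funrneg measurableT iX).
  by rewrite /= EXn_oo.
rewrite !integral_U // -muleBr ?fin_num_adde_defl ?fin_numN //.
rewrite /ES a_lt1; congr (_ * _)%E.
rewrite (@integral_itv_bndoo _ a 1 _ true false); last first.
  by apply: measurable_funTS; exact: measurable_VaR.
rewrite integralE; congr (_ - _)%E; apply: eq_integral => b;
  rewrite inE /= in_itv /= => /andP[ab b_lt1];
  have VaR_q : VaR P b X = (q b)%:E
    by rewrite fineK // VaR_fin_num // b_lt1 (le_lt_trans a_ge0 ab).
- by rewrite funeposE VaR_q /funrpos EFin_max.
- by rewrite funenegE VaR_q /funrneg EFin_max.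
Qed.

Lemma expectation_le_ES : (\int[P]_w (X w)%:E <= ES P a X)%E.
Proof.
rewrite ES_funrposBneg (integralE _ _ (EFin \o X)) funerpos funerneg.
exact: leeB expectation_funrpos_le_uniform uniform_funrneg_le_expectation.
Qed.

Lemma ES_le_expectation_funrpos :
  (ES P a X <= ((1 - a)^-1)%:E * \int[P]_w (X^\+ w)%:E)%E.
Proof.
rewrite ES_funrposBneg; apply: le_trans uniform_funrpos_le_expectation.
by rewrite geeDl // oppe_le0; apply: integral_ge0 => b _; rewrite lee_fin.
Qed.

Lemma ES_le_VaR1 : (ES P a X <= VaR P 1 X)%E.
Proof.
have [->|] := eqVneq (VaR P 1 X) +oo%E; first exact: leey.
rewrite -ltey => VaR1_lty.
have VaR1_fin : VaR P 1 X \is a fin_num.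
  by rewrite fin_numE -ltey -ltNye VaR1_lty VaR_gtNy.
set v := fine (VaR P 1 X).
have q_le_v b : a < b < 1 -> q b <= v.
  case/andP => ab b_lt1; have VaRb_fin : VaR P b X \is a fin_num.
    by rewrite VaR_fin_num // b_lt1 (le_lt_trans a_ge0 ab).
  by rewrite -lee_fin /v /q !fineK //; exact/VaR_nondecreasing/ltW.
have v_split : v = Num.max v 0 - Num.max (- v) 0.
  have [v_ge0|v_lt0] := leP 0 v.
    by rewrite max_r ?subr0 // oppr_le0.
  by rewrite max_l ?sub0r ?opprK // oppr_ge0 ltW.
rewrite ES_funrposBneg -(fineK VaR1_fin) -/v v_split EFinB.
apply: leeB.
- apply: integral_uniform_le_cst => //; first exact/measurable_EFinP.
    by move=> b; rewrite lee_fin funrpos_ge0.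
  by move=> b /q_le_v qbv; rewrite lee_fin /funrpos ge_max !le_max qbv lexx orbT.
- apply: integral_uniform_ge_cst => //; first by rewrite le_max lexx orbT.
  + exact/measurable_EFinP.
  + by move=> b; rewrite lee_fin funrneg_ge0.
  by move=> b /q_le_v qbv; rewrite lee_fin /funrneg ge_max !le_max lerN2 qbv lexx orbT.
Qed.

End uniform_average.

Lemma expectation_le_ES_le_VaR1 a : 0 <= a <= 1 ->
  (\int[P]_w (X w)%:E <= ES P a X <= VaR P 1 X)%E.
Proof.
case/andP => a_ge0; rewrite le_eqVlt => /orP[/eqP ->|a_lt1].
  rewrite ES1E lexx andbT.
  exact: le_trans (expectation_le_ES (lexx 0) ltr01) (ES_le_VaR1 (lexx 0) ltr01).
by rewrite expectation_le_ES // ES_le_VaR1.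
Qed.

Lemma ESL_lty (Lam : R -> R) x0 : (forall x, 0 <= Lam x) ->
  (forall x y, x <= y -> Lam y <= Lam x) -> Lam x0 < 1 -> (ESL P Lam X < +oo)%E.
Proof.
move=> Lam_ge0 Lam_ni Lam_x0_lt1.
set EXp := (\int[P]_w (X^\+ w)%:E)%E.
have EXp_fin : EXp \is a fin_num.
  by apply: integrable_fin_num => //; exact: integrable_funrpos.
have EXp_ge0 : (0 <= EXp)%E by apply: integral_ge0 => w _; rewrite lee_fin.
pose M := (1 - Lam x0)^-1 * fine EXp.
apply: le_lt_trans (ESL_le_max (M := M) _) (ltry _) => x /ltW/Lam_ni Lam_le.
have Lam_x_lt1 := le_lt_trans Lam_le Lam_x0_lt1.
apply: le_trans (ES_le_expectation_funrpos (Lam_ge0 x) Lam_x_lt1) _.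
rewrite /M EFinM fineK // lee_wpmul2r // lee_fin lef_pV2 ?posrE ?subr_gt0 //.
by rewrite lerD2l lerN2.
Qed.

End expected_shortfall_bounds.

Theorem proposition6 (R : realType) (d : measure_display) (T : measurableType d)
  (P : probability T R) (Lam : R -> R) (X : T -> R) :
  atomless P ->
  (forall x, 0 <= Lam x <= 1) ->
  (forall x y, x <= y -> Lam y <= Lam x) ->
  P.-integrable setT (EFin \o X) ->
  ([/\ (-oo < \int[P]_w (X w)%:E)%E,
       (\int[P]_w (X w)%:E <= ESL P Lam X)%E &
       (ESL P Lam X <= ES P 1 X)%E]
   /\ (ESL P Lam X \is a fin_num <->
       ((VaR P 1 X < +oo)%E \/ exists x, Lam x != 1))).
Proof.
move=> _ Lam01 Lam_ni iX.
have ES_bounds x := expectation_le_ES_le_VaR1 iX (Lam01 x).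
have E_fin : (\int[P]_w (X w)%:E)%E \is a fin_num by exact: integrable_fin_num.
have E_gtNy : (-oo < \int[P]_w (X w)%:E)%E by case/fin_numPlt/andP: E_fin.
have E_le_ESL : (\int[P]_w (X w)%:E <= ESL P Lam X)%E.
  rewrite -(fineK E_fin) le_ESL // fineK //.
  by case/andP: (ES_bounds (fine (\int[P]_w (X w)%:E))).
have ESL_le_VaR1 : (ESL P Lam X <= VaR P 1 X)%E.
  by apply: ESL_le => x; case/andP: (ES_bounds x).
rewrite ES1E; split=> //; split=> [ESL_fin|[VaR1_lty|[x0 Lam_x0]]].
- apply: contrapT => /not_orP[/negP]; rewrite -leNgt leye_eq => /eqP VaR1_oo.
  move=> /forallNP Lam1; move: ESL_fin; rewrite ESL_cst1 ?VaR1_oo //.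
  by move=> x; apply/eqP/negPn/negP; exact: Lam1.
- rewrite fin_numElt (lt_le_trans E_gtNy) //=.
  exact: le_lt_trans ESL_le_VaR1 VaR1_lty.
- rewrite fin_numElt (lt_le_trans E_gtNy) //=.
  apply: (ESL_lty iX (x0 := x0)) => // [x|]; first by case/andP: (Lam01 x).
  by rewrite lt_neqAle Lam_x0; case/andP: (Lam01 x0).
Qed.
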